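(* Every prime graph of order $n\le 50$ is odd prime.
   Context: All graphs are finite and simple. A graph $G$ of order $n$ is prime if there is a bijection $f:V(G)\to\{1,2,\ldots,n\}$ with $\gcd(f(u),f(v))=1$ for every edge $uv$. It is odd prime if there is a bijection $\ell:V(G)\to\{1,3,\ldots,2n-1\}$ with $\gcd(\ell(u),\ell(v))=1$ for every edge $uv$. *)

From mathcomp Require Import all_boot.
Set Implicit Arguments. Unset Strict Implicit. Unset Printing Implicit Defensive.

Definition simple_graph (V : finType) (e : rel V) : Prop :=
  symmetric e /\ irreflexive e.

Definition bij_onto (V : finType) (f : V -> nat) (L : pred nat) : Prop :=
  injective f /\ (forall v, L (f v)) /\ (forall k, L k -> exists v, f v = k).

Definition prime_labels (n : nat) : pred nat := fun k => (1 <= k <= n).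
Definition odd_labels (n : nat) : pred nat := fun k => odd k && (k < 2 * n).

Definition prime_graph (V : finType) (e : rel V) : Prop :=
  exists f : V -> nat, bij_onto f (prime_labels #|V|) /\
    forall u v, e u v -> coprime (f u) (f v).

Definition odd_prime_graph (V : finType) (e : rel V) : Prop :=
  exists l : V -> nat, bij_onto l (odd_labels #|V|) /\
    forall u v, e u v -> coprime (l u) (l v).

From mathcomp Require Import all_boot.
Set Implicit Arguments. Unset Strict Implicit. Unset Printing Implicit Defensive.

(* If a bijection g from {1,...,n} onto {1,3,...,2n-1} maps coprime pairs to
   coprime pairs, then composing a prime labelling with g gives an odd prime
   labelling of any graph of order n.  For every n <= 50 such a g is exhibited
   explicitly and checked by computation. *)

Lemma bij_onto_comp (V : finType) (f : V -> nat) (g : nat -> nat)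
    (L L' : pred nat) :
  bij_onto f L -> {in L &, injective g} -> {in L, forall k, L' (g k)} ->
  (forall k, L' k -> exists2 i, L i & g i = k) -> bij_onto (g \o f) L'.
Proof.
move=> [f_inj [fL f_onto]] g_inj gL g_onto; split; [|split].
- by move=> u v /g_inj guv; apply/f_inj/guv; apply: fL.
- by move=> v; apply: gL; apply: fL.
- move=> k /g_onto [i /f_onto [v <-] <-].
  by exists v.
Qed.

Definition coprime_relabeling (n : nat) (g : nat -> nat) : Prop :=
  [/\ {in prime_labels n &, injective g},
      {in prime_labels n, forall k, odd_labels n (g k)},
      (forall k, odd_labels n k -> exists2 i, prime_labels n i & g i = k) &
      {in prime_labels n &, forall i j, coprime i j -> coprime (g i) (g j)}].

Lemma odd_prime_of_coprime_relabeling (V : finType) (e : rel V) (g : nat -> nat) :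
  coprime_relabeling #|V| g -> prime_graph e -> odd_prime_graph e.
Proof.
move=> [g_inj gL g_onto g_cop] [f [f_bij f_cop]].
exists (g \o f); split; first exact: bij_onto_comp f_bij g_inj gL g_onto.
have [_ [fL _]] := f_bij.
by move=> u v /f_cop; apply: g_cop; apply: fL.
Qed.

Definition odd_seq (n : nat) : seq nat := [seq i.*2.+1 | i <- iota 0 n].

Lemma mem_odd_seq (n k : nat) : (k \in odd_seq n) = odd_labels n k.
Proof.
rewrite /odd_labels; apply/mapP/andP => [[i] | [k_odd k_lt]].
  by rewrite mem_iota add0n => i_lt ->; rewrite /= odd_double mul2n ltn_Sdouble.
have k_eq : k = (k./2).*2.+1 by rewrite -[LHS]odd_double_half k_odd.
exists k./2 => //.
by rewrite mem_iota add0n -ltn_Sdouble -k_eq -mul2n.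
Qed.

Lemma odd_seq_uniq (n : nat) : uniq (odd_seq n).
Proof. by rewrite map_inj_uniq ?iota_uniq // => i j [/double_inj]. Qed.

Definition coprime_relabelingb (n : nat) (s : seq nat) : bool :=
  perm_eq s (odd_seq n) &&
  all (fun i => all (fun j => coprime i j ==> coprime (nth 0 s i.-1) (nth 0 s j.-1))
                    (iota 1 n)) (iota 1 n).

Lemma coprime_relabelingP (n : nat) (s : seq nat) :
  coprime_relabelingb n s -> coprime_relabeling n (fun k => nth 0 s k.-1).
Proof.
case/andP=> s_perm s_cop.
have s_size : size s = n by rewrite (perm_size s_perm) size_map size_iota.
have s_uniq : uniq s by rewrite (perm_uniq s_perm) odd_seq_uniq.
have mem_s k : (k \in s) = odd_labels n k by rewrite (perm_mem s_perm) mem_odd_seq.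
have label_iota k : prime_labels n k -> k \in iota 1 n by rewrite mem_iota add1n ltnS.
have label_idx k : prime_labels n k -> k.-1 < size s.
  by case/andP; rewrite s_size; case: k.
split.
- move=> [|i] [|j] //= i_lab j_lab /eqP.
  by rewrite nth_uniq ?(label_idx _ i_lab) ?(label_idx _ j_lab) // => /eqP ->.
- by move=> k /label_idx k_lt; rewrite -mem_s mem_nth.
- move=> k; rewrite -mem_s => k_in.
  exists (index k s).+1; last exact: nth_index.
  by rewrite /prime_labels /= -s_size index_mem.
- move=> i j /label_iota i_in /label_iota j_in.
  by move/allP/(_ i i_in)/allP/(_ j j_in)/implyP: s_cop.
Qed.

(* Row n lists the images of 1, ..., n under the relabeling for order n. *)
Definition odd_relabeling_table : seq (seq nat) := [::
  [::];
  [:: 1];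
  [:: 1; 3];
  [:: 1; 3; 5];
  [:: 1; 7; 5; 3];
  [:: 1; 9; 5; 3; 7];
  [:: 1; 11; 5; 9; 7; 3];
  [:: 1; 13; 5; 9; 7; 3; 11];
  [:: 1; 13; 5; 9; 7; 15; 11; 3];
  [:: 1; 13; 7; 9; 17; 15; 11; 3; 5];
  [:: 1; 19; 13; 17; 7; 15; 11; 9; 5; 3];
  [:: 1; 17; 13; 9; 7; 15; 11; 3; 5; 21; 19];
  [:: 1; 23; 7; 19; 17; 21; 11; 9; 5; 3; 13; 15];
  [:: 1; 23; 25; 19; 7; 15; 11; 9; 5; 21; 13; 3; 17];
  [:: 1; 27; 25; 23; 7; 15; 11; 19; 5; 21; 13; 9; 17; 3];
  [:: 1; 29; 25; 27; 7; 15; 11; 19; 23; 21; 13; 3; 17; 9; 5];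
  [:: 1; 31; 13; 27; 29; 5; 23; 25; 11; 15; 17; 21; 19; 9; 7; 3];
  [:: 1; 33; 25; 27; 23; 15; 29; 21; 5; 11; 13; 9; 17; 7; 19; 3; 31];
  [:: 1; 31; 25; 29; 7; 23; 11; 27; 5; 21; 13; 15; 17; 33; 35; 9; 19; 3];
  [:: 1; 37; 25; 31; 7; 27; 11; 29; 5; 21; 13; 15; 17; 33; 35; 9; 19; 3; 23];
  [:: 1; 29; 25; 27; 23; 39; 11; 9; 13; 21; 31; 15; 19; 33; 35; 3; 17; 5; 37; 7];
  [:: 1; 27; 41; 21; 25; 33; 17; 9; 19; 35; 23; 11; 37; 39; 5; 7; 29; 3; 31; 15; 13];
  [:: 1; 43; 25; 41; 7; 15; 31; 37; 5; 21; 13; 29; 17; 33; 35; 27; 19; 9; 23; 3; 11; 39];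
  [:: 1; 43; 37; 27; 23; 45; 11; 9; 31; 21; 13; 25; 29; 33; 35; 3; 41; 15; 19; 7; 5; 39; 17];
  [:: 1; 47; 43; 41; 7; 15; 11; 37; 25; 27; 13; 45; 17; 33; 35; 31; 19; 9; 23; 21; 5; 39; 29; 3];
  [:: 1; 47; 25; 41; 49; 27; 11; 37; 19; 3; 13; 45; 17; 33; 35; 31; 29; 15; 23; 21; 5; 39; 43; 9; 7];
  [:: 1; 47; 31; 43; 49; 27; 11; 41; 25; 3; 13; 45; 17; 33; 35; 37; 19; 15; 23; 21; 5; 39; 29; 9; 7; 51];
  [:: 1; 41; 43; 39; 53; 15; 17; 29; 25; 21; 11; 45; 23; 51; 35; 27; 37; 13; 47; 7; 19; 33; 31; 3; 49; 9; 5];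
  [:: 1; 53; 31; 51; 49; 45; 11; 47; 25; 21; 13; 9; 29; 33; 35; 41; 19; 37; 23; 27; 55; 39; 43; 15; 7; 17; 5; 3];
  [:: 1; 51; 49; 47; 53; 45; 43; 27; 35; 33; 13; 21; 19; 23; 55; 17; 37; 5; 29; 9; 25; 39; 41; 15; 11; 57; 7; 3; 31];
  [:: 1; 41; 47; 27; 37; 45; 49; 9; 25; 51; 59; 39; 19; 21; 55; 3; 23; 15; 31; 33; 35; 53; 43; 13; 17; 57; 5; 7; 29; 11];
  [:: 1; 51; 53; 45; 19; 39; 37; 27; 49; 57; 31; 35; 29; 25; 13; 17; 61; 21; 47; 55; 43; 15; 41; 5; 11; 9; 7; 3; 59; 33; 23];
  [:: 1; 53; 25; 39; 49; 45; 29; 31; 19; 63; 17; 57; 41; 33; 35; 27; 61; 15; 43; 21; 55; 51; 59; 9; 37; 13; 5; 11; 47; 7; 23; 3];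
  [:: 1; 63; 55; 49; 23; 45; 29; 27; 37; 39; 19; 15; 41; 51; 65; 21; 53; 33; 61; 9; 25; 57; 59; 35; 13; 7; 31; 17; 47; 11; 43; 3; 5];
  [:: 1; 67; 53; 61; 49; 45; 11; 59; 25; 21; 13; 43; 17; 33; 35; 47; 19; 41; 23; 63; 55; 39; 29; 15; 7; 51; 5; 27; 31; 9; 37; 3; 65; 57];
  [:: 1; 69; 43; 39; 53; 45; 49; 33; 25; 27; 37; 65; 59; 21; 19; 23; 67; 57; 61; 13; 35; 51; 29; 55; 31; 11; 5; 63; 47; 15; 41; 9; 17; 3; 7];
  [:: 1; 69; 49; 51; 67; 45; 19; 47; 43; 23; 59; 63; 71; 57; 65; 27; 53; 21; 31; 39; 55; 41; 29; 15; 13; 17; 35; 33; 37; 7; 61; 9; 25; 3; 11; 5];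
  [:: 1; 73; 43; 59; 49; 65; 71; 39; 25; 69; 11; 45; 37; 57; 35; 27; 67; 51; 47; 21; 5; 33; 31; 15; 23; 29; 17; 19; 53; 63; 41; 13; 55; 9; 7; 3; 61];
  [:: 1; 63; 43; 53; 67; 35; 19; 49; 25; 27; 73; 75; 37; 57; 41; 33; 71; 55; 17; 69; 65; 9; 47; 45; 23; 21; 5; 39; 29; 15; 31; 11; 61; 7; 13; 3; 59; 51];
  [:: 1; 67; 55; 39; 49; 75; 61; 37; 25; 63; 73; 33; 53; 51; 77; 31; 59; 45; 23; 21; 41; 27; 71; 65; 7; 57; 11; 3; 47; 35; 29; 13; 5; 9; 17; 15; 43; 69; 19];
  [:: 1; 79; 71; 67; 49; 75; 31; 59; 53; 63; 13; 45; 61; 11; 35; 47; 19; 9; 43; 21; 55; 39; 29; 15; 17; 69; 25; 33; 73; 51; 37; 27; 65; 57; 77; 5; 41; 3; 23; 7];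
  [:: 1; 81; 61; 39; 49; 55; 23; 33; 25; 77; 71; 75; 79; 69; 35; 27; 43; 65; 17; 63; 19; 11; 73; 45; 41; 9; 5; 57; 67; 21; 31; 13; 59; 37; 7; 15; 47; 51; 29; 3; 53];
  [:: 1; 81; 61; 79; 67; 65; 43; 63; 55; 21; 41; 45; 23; 57; 29; 49; 31; 77; 71; 39; 19; 27; 47; 75; 37; 69; 25; 51; 83; 35; 73; 13; 11; 9; 17; 33; 59; 7; 5; 3; 53; 15];
  [:: 1; 81; 67; 79; 53; 15; 19; 73; 25; 21; 13; 75; 17; 33; 35; 59; 61; 47; 23; 63; 55; 39; 71; 45; 49; 51; 5; 57; 83; 31; 37; 27; 65; 9; 77; 3; 41; 69; 85; 7; 43; 11; 29];
  [:: 1; 81; 85; 63; 41; 45; 11; 49; 25; 39; 83; 51; 47; 77; 65; 27; 73; 75; 29; 69; 55; 71; 43; 35; 31; 57; 17; 33; 67; 13; 53; 21; 79; 9; 23; 15; 59; 87; 19; 7; 37; 5; 61; 3];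
  [:: 1; 81; 55; 71; 49; 45; 29; 61; 25; 63; 83; 85; 31; 87; 77; 53; 43; 33; 67; 39; 19; 27; 73; 75; 13; 69; 11; 57; 89; 65; 37; 51; 59; 17; 7; 15; 41; 9; 23; 21; 47; 5; 79; 3; 35];
  [:: 1; 81; 61; 75; 89; 85; 37; 55; 49; 33; 67; 87; 19; 65; 53; 45; 59; 77; 31; 15; 91; 3; 23; 35; 79; 57; 29; 39; 83; 63; 47; 27; 43; 25; 13; 51; 71; 11; 17; 9; 41; 21; 73; 5; 7; 69];
  [:: 1; 81; 49; 69; 83; 63; 11; 57; 35; 93; 17; 15; 29; 43; 91; 53; 89; 45; 73; 39; 77; 51; 59; 75; 37; 87; 25; 33; 79; 65; 67; 27; 85; 23; 31; 21; 61; 19; 7; 13; 71; 55; 41; 9; 5; 3; 47];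
  [:: 1; 89; 65; 81; 19; 75; 31; 63; 25; 57; 11; 91; 71; 87; 95; 49; 61; 45; 43; 51; 13; 77; 73; 69; 17; 27; 23; 93; 79; 39; 67; 21; 55; 53; 29; 35; 47; 41; 5; 9; 37; 15; 83; 33; 85; 7; 59; 3];
  [:: 1; 91; 81; 77; 61; 63; 97; 65; 27; 49; 67; 45; 19; 13; 69; 55; 47; 87; 79; 35; 93; 85; 83; 75; 23; 95; 9; 5; 59; 21; 41; 29; 51; 25; 89; 39; 71; 11; 57; 7; 43; 33; 37; 17; 3; 53; 73; 15; 31];
  [:: 1; 81; 89; 75; 49; 47; 97; 45; 83; 63; 71; 55; 41; 39; 77; 27; 31; 99; 23; 85; 67; 95; 29; 33; 17; 25; 73; 65; 37; 51; 53; 15; 19; 93; 91; 9; 43; 69; 11; 35; 79; 3; 59; 57; 7; 87; 61; 5; 13; 21]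
].

Lemma odd_relabeling_table_correct :
  all (fun n => coprime_relabelingb n (nth [::] odd_relabeling_table n)) (iota 0 51).
Proof. by vm_compute. Qed.

Theorem theorem6p2 (V : finType) (e : rel V) :
  simple_graph e -> #|V| <= 50 -> prime_graph e -> odd_prime_graph e.
Proof.
move=> _ V_le50; apply: odd_prime_of_coprime_relabeling.
apply: coprime_relabelingP.
by move/allP: odd_relabeling_table_correct; apply; rewrite mem_iota.
Qed.
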